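(* Let $(X_j,d_j)$, $j\in\mathbb N$, be nonempty metric spaces that are equibounded (there is $D>0$ with $\operatorname{diam}_{d_j}(X_j)\le D$ for all $j$) and equicompact (for every $R\in(0,D]$ there is $N(R)\in\mathbb N$ such that every $X_j$ is covered by $N(R)$ open balls of radius $R$ centered at points of $X_j$). Let $\varepsilon_i=2^{-i}$ and let $N_i\in\mathbb N$ ($i\in\mathbb N$) be such that every $X_j$ can be covered by $N_i$ open balls of radius $\varepsilon_i$ centered at points of $X_j$. For $i\in\mathbb N$ let $$A_i=\{(a_1,\dots,a_i):1\le a_k\le N_k\text{ for }k=1,\dots,i\},$$ let $p_i:A_{i+1}\to A_i$, $p_i(a_1,\dots,a_{i+1})=(a_1,\dots,a_i)$, and let $A=\bigsqcup_{i=1}^\infty A_i$ (a countable set not depending on $j$). Then for every $j$ there exist maps $I^j_i:A_i\to X_j$ ($i\in\mathbb N$), combined into $I^j:A\to X_j$ with $I^j(a)=I^j_i(a)$ for $a\in A_i$, writing $x^j_a=I^j(a)$, such that: (1) for every $i\in\mathbb N$, $I^j_i(A_i)$ is an $\varepsilon_i$-net of $X_j$: $X_j\subset\bigcup_{a\in A_i}B_{d_j}(x^j_a,\varepsilon_i)$; (2) for every $i\in\mathbb N$ and every $a=(a_1,\dots,a_{i+1})\in A_{i+1}$, $x^j_{(a_1,\dots,a_i,a_{i+1})}=I^j_{i+1}(a)\in B_{d_j}\big(I^j_i(p_i(a)),2\varepsilon_i\big)=B_{d_j}\big(x^j_{(a_1,\dots,a_i)},2\varepsilon_i\big)$; (3)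 the set $\mathcal N_j=I^j(A)=\{x^j_a:a\in A\}=\bigcup_{i\in\mathbb N}I^j_i(A_i)$ is a countable dense subset of $X_j$.
   Context: $B_{d_j}(x,r)$ denotes the open ball of radius $r$ about $x$ in $(X_j,d_j)$. *)

From mathcomp Require Import all_boot all_order all_algebra.
From mathcomp Require Import all_classical all_reals.
Set Implicit Arguments. Unset Strict Implicit. Unset Printing Implicit Defensive.
Import Order.TTheory GRing.Theory Num.Theory.
Local Open Scope ring_scope.
Local Open Scope classical_set_scope.

Definition is_metric (R : realType) (T : Type) (d : T -> T -> R) : Prop :=
  (forall x y, 0 <= d x y) /\
  (forall x y, d x y = 0 <-> x = y) /\
  (forall x y, d x y = d y x) /\
  (forall x y z, d x z <= d x y + d y z).

Definition ball_d (R : realType) (T : Type) (d : T -> T -> R) (x : T) (r : R) : set T :=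
  [set y | d x y < r].

Definition covered_by (R : realType) (T : Type) (d : T -> T -> R) (n : nat) (r : R) : Prop :=
  exists c : nat -> T, forall x : T, exists2 k, (k < n)%N & ball_d d (c k) r x.

Definition eps (R : realType) (i : nat) : R := 2%:R ^- i.

(* A_i = { (a_1,...,a_i) : 1 <= a_k <= N_k }, tuples encoded as seq nat,
   a_k = nth 0 a k.-1 *)
Definition Aset (N : nat -> nat) (i : nat) : set (seq nat) :=
  [set a | size a = i /\ forall k, (1 <= k <= i)%N -> (1 <= nth 0 a k.-1 <= N k)%N].

(* A = disjoint union of the A_i, i >= 1 (disjoint since sizes differ) *)
Definition Aall (N : nat -> nat) : set (seq nat) :=
  [set a | exists2 i, (1 <= i)%N & Aset N i a].

Definition proj_p (i : nat) (a : seq nat) : seq nat := take i a.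

Definition dense_in (R : realType) (T : Type) (d : T -> T -> R) (S : set T) : Prop :=
  forall x (r : R), 0 < r -> exists2 y, S y & ball_d d x r y.

From mathcomp Require Import all_boot all_order all_algebra.
From mathcomp Require Import all_classical all_reals.
From mathcomp Require Import zify.
Set Implicit Arguments. Unset Strict Implicit. Unset Printing Implicit Defensive.
Import Order.TTheory GRing.Theory Num.Theory.
Local Open Scope ring_scope.
Local Open Scope classical_set_scope.

(** Fix centres [c i 0, ..., c i (N i).-1] of an [eps i]-net at each level
    [i].  The point indexed by [(a_1, ..., a_(i+1))] is the centre
    [c (i+1) (a_(i+1) - 1)] if that centre lies within [2 eps i] of the point
    indexed by [(a_1, ..., a_i)], and that parent point otherwise.  The nets
    stay [eps i]-nets: if [x] is [eps i]-close to its level-[i] point and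
    [eps (i+1)]-close to a level-[i+1] centre, these two are less than
    [eps i + eps (i+1) < 2 eps i] apart, so the centre is kept.  Density
    follows since [eps i] tends to [0]. *)

Lemma eps_gt0 (R : realType) i : 0 < eps R i.
Proof. by rewrite /eps invr_gt0 exprn_gt0. Qed.

Lemma eps_ltS (R : realType) i : eps R i.+1 < eps R i.
Proof.
rewrite /eps exprS invfM -[ltRHS]mul1r ltr_pM2r ?eps_gt0 //.
by rewrite invf_lt1 // ltr1n.
Qed.

Lemma eps_lt (R : realType) (r : R) : 0 < r -> exists2 i, (1 <= i)%N & eps R i < r.
Proof.
move=> r_gt0; set n := Num.Def.archi_bound r^-1.
exists n.+1 => //.
have rVn : r^-1 < n%:R by apply: archi_boundP; rewrite invr_ge0 ltW.
have n_lt2n : (n%:R : R) < 2%:R ^+ n.+1.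
  by rewrite -natrX ltr_nat (leq_trans (ltn_expl n (isT : (1 < 2)%N))) ?leq_pexp2l.
rewrite /eps -[ltRHS]invrK ltf_pV2 ?posrE ?exprn_gt0 ?invr_gt0 //.
exact: lt_trans rVn n_lt2n.
Qed.

Lemma Aset_rcons (N : nat -> nat) i a k :
  Aset N i a -> (1 <= k <= N i.+1)%N -> Aset N i.+1 (rcons a k).
Proof.
move=> [size_a a_bnd] k_bnd; split; first by rewrite size_rcons size_a.
move=> l /andP[l_gt0 l_le]; rewrite nth_rcons size_a.
case: (ltnP l.-1 i) => [l_lt | l_ge]; first by apply: a_bnd; lia.
have -> : l = i.+1 by lia.
by rewrite /= eqxx.
Qed.

Section NestedNets.
Variables (R : realType) (T : Type) (d : T -> T -> R).
Hypotheses (d_refl : forall x, d x x = 0) (d_sym : forall x y, d x y = d y x)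
  (d_triangle : forall x y z, d x z <= d x y + d y z).
Variables (N : nat -> nat) (c : nat -> nat -> T).
Hypothesis c_cover : forall i, (1 <= i)%N ->
  forall x, exists2 k, (k < N i)%N & ball_d d (c i k) (eps R i) x.

Definition snap (y z : T) (r : R) : T := if d y z < r then z else y.

Lemma snap_ball y z r : 0 < r -> ball_d d y r (snap y z r).
Proof. by rewrite /ball_d /snap /=; case: ifP; rewrite ?d_refl. Qed.

(** [net_pt m a] is the point of level [m.+1], indexed by the first [m.+1]
    entries of [a]. *)
Fixpoint net_pt (m : nat) (a : seq nat) : T :=
  let z := c m.+1 (nth 0 a m).-1 in
  if m is m'.+1 then snap (net_pt m' a) z (2%:R * eps R m) else z.

Definition net (a : seq nat) : T := net_pt (size a).-1 a.

Lemma net_pt_take a m n : (m < n)%N -> net_pt m (take n a) = net_pt m a.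
Proof. by elim: m => [|m IHm] lt_mn /=; rewrite nth_take // ?IHm // ltnW. Qed.

Lemma net_rcons m a k : size a = m.+1 ->
  net (rcons a k) = snap (net a) (c m.+2 k.-1) (2%:R * eps R m.+1).
Proof.
move=> size_a; rewrite /net size_rcons size_a /= nth_rcons size_a ltnn eqxx.
by rewrite -(net_pt_take (rcons a k) (ltnSn m)) -size_a -cats1 take_size_cat.
Qed.

Lemma net_cover i : (1 <= i)%N ->
  forall x, exists2 a, Aset N i a & ball_d d (net a) (eps R i) x.
Proof.
case: i => // m _; elim: m => [|m IHm] x.
  have [k k_lt x_near] := c_cover (i:=1) isT x.
  exists [:: k.+1] => //.
  by apply: (@Aset_rcons N 0 [::]) => //; split=> // l; lia.
have [a a_net x_near_a] := IHm x.
have [k k_lt x_near_k] := c_cover (i:=m.+2) isT x.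
exists (rcons a k.+1); first exact: Aset_rcons.
have centre_close : d (net a) (c m.+2 k) < 2%:R * eps R m.+1.
  apply: le_lt_trans (d_triangle _ x _) _.
  rewrite [d x _]d_sym mulr2n mulrDl mul1r ltrD //.
  exact: lt_trans x_near_k (eps_ltS _ _).
by rewrite (net_rcons _ a_net.1) /snap /= centre_close.
Qed.

Lemma net_parent i a : (1 <= i)%N -> size a = i.+1 ->
  ball_d d (net (proj_p i a)) (2%:R * eps R i) (net a).
Proof.
case: i => // m _ size_a.
rewrite /net /proj_p size_takel ?size_a // net_pt_take //.
by apply: snap_ball; rewrite mulr_gt0 ?eps_gt0.
Qed.

Lemma net_dense : dense_in d (net @` Aall N).
Proof.
move=> x r r_gt0; have [i i_gt0 eps_lt_r] := eps_lt r_gt0.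
have [a a_net x_near] := net_cover i_gt0 x.
exists (net a); first by exists a => //; exists i.
by rewrite /ball_d /= d_sym (lt_trans x_near).
Qed.

End NestedNets.

Theorem proposition3p2 (R : realType) (X : nat -> Type)
  (d : forall j, X j -> X j -> R)
  (hmet : forall j, is_metric (d j))
  (hne : forall j, inhabited (X j))
  (D : R) (hD : 0 < D)
  (hbd : forall j (x y : X j), d j x y <= D)
  (heqc : forall r : R, 0 < r <= D -> exists n : nat, forall j, covered_by (d j) n r)
  (N : nat -> nat)
  (hN : forall i, (1 <= i)%N -> forall j, covered_by (d j) (N i) (eps R i)) :
  forall j, exists I : seq nat -> X j,
    (forall i, (1 <= i)%N -> forall x : X j,
        exists2 a, Aset N i a & ball_d (d j) (I a) (eps R i) x) /\
    (forall i, (1 <= i)%N -> forall a, Aset N i.+1 a ->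
        ball_d (d j) (I (proj_p i a)) (2%:R * eps R i) (I a)) /\
    (countable (I @` Aall N) /\ dense_in (d j) (I @` Aall N)).
Proof.
move=> j; have [x0] := hne j.
have [_ [d_eq0 [d_sym d_triangle]]] := hmet j.
have d_refl (x : X j) : d j x x = 0 by apply/d_eq0.
have centres i : exists ci : nat -> X j, (1 <= i)%N ->
    forall x, exists2 k, (k < N i)%N & ball_d (d j) (ci k) (eps R i) x.
  case: (posnP i) => [->|i_gt0]; first by exists (fun=> x0).
  by have [ci ci_cover] := hN i i_gt0 j; exists ci.
have [c c_cover] := boolp.choice centres.
exists (net (d j) c); split.
  by move=> i; exact: (net_cover d_sym d_triangle c_cover (i:=i)).
split; first by move=> i i_gt0 a [size_a _]; exact: (net_parent d_refl c i_gt0 size_a).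
split; first exact: sub_countable (card_image_le _ _) (countableP _).
exact (net_dense d_sym d_triangle c_cover).
Qed.
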